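(* Let $Q$ be a subring of $\mathbb{R}$ containing $1$, let $R = Q \times Q$ with coordinatewise addition and multiplication $(a,b)\cdot(c,d) = (ac, ad + bc)$, and consider the Frobenius template $(A(Q), C(Q), U(Q))$ in $R$, where $A(Q) = (Q \cap (0,\infty)) \times (Q \cap [0,\infty))$ and $C(Q) = U(Q) = (Q \cap [0,\infty))^2$. Let $n$ be a positive integer and let $(\alpha_1, \dots, \alpha_n)$ be a list in $A(Q) \setminus (Q \times \{0\})$ (i.e. $\alpha_i = (a_i, b_i)$ with $a_i > 0$ and $b_i > 0$ for all $i$). Then $\mathrm{Frob}(\alpha_1, \dots, \alpha_n) = \emptyset$.
   Context: $R$ is isomorphic to the ring of upper triangular $2\times 2$ matrices over $Q$ with constant diagonal, and is commutative. For a list $(\alpha_1,\dots,\alpha_n)$ in $A(Q)$, $MN(\alpha_1, \dots, \alpha_n) = \{\sum_{i=1}^n \alpha_i \lambda_i : \lambda_1, \dots, \lambda_n \in C(Q)\}$ (product in $R$), and $\mathrm{Frob}(\alpha_1, \dots, \alpha_n) = \{w \in R : w + U(Q) \subseteq MN(\alpha_1, \dots, \alpha_n)\}$, where $w + U(Q) = \{w + u : u \in U(Q)\}$. *)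

From mathcomp Require Import all_boot all_order all_algebra.
From mathcomp Require Import reals.
Set Implicit Arguments. Unset Strict Implicit. Unset Printing Implicit Defensive.
Import Order.TTheory GRing.Theory Num.Theory.
Local Open Scope ring_scope.

Section Defs.
Variable R : realType.

Definition is_subring (Q : pred R) : Prop :=
  [/\ 1 \in Q,
      (forall x y, x \in Q -> y \in Q -> x - y \in Q) &
      (forall x y, x \in Q -> y \in Q -> x * y \in Q)].

(* the ring R = Q x Q : elements are pairs of reals with coordinates in Q *)
Definition inQ2 (Q : pred R) (w : R * R) : Prop := w.1 \in Q /\ w.2 \in Q.

Definition padd (x y : R * R) : R * R := (x.1 + y.1, x.2 + y.2).
Definition pmul (x y : R * R) : R * R := (x.1 * y.1, x.1 * y.2 + x.2 * y.1).

Definition inA (Q : pred R) (x : R * R) : Prop :=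
  [/\ x.1 \in Q, 0 < x.1, x.2 \in Q & 0 <= x.2].

Definition inC (Q : pred R) (x : R * R) : Prop :=
  [/\ x.1 \in Q, 0 <= x.1, x.2 \in Q & 0 <= x.2].

Definition inU (Q : pred R) (x : R * R) : Prop := inC Q x.

Definition MN (Q : pred R) (n : nat) (alpha : 'I_n -> R * R) (v : R * R) : Prop :=
  exists lam : 'I_n -> R * R, (forall i, inC Q (lam i)) /\
    v = (\sum_(i < n) (pmul (alpha i) (lam i)).1,
         \sum_(i < n) (pmul (alpha i) (lam i)).2).

Definition Frob (Q : pred R) (n : nat) (alpha : 'I_n -> R * R) (w : R * R) : Prop :=
  inQ2 Q w /\ forall u, inU Q u -> MN Q alpha (padd w u).

End Defs.

From mathcomp Require Import all_boot all_order all_algebra.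
From mathcomp Require Import reals.
Import Order.TTheory GRing.Theory Num.Theory.
Local Open Scope ring_scope.

(* Every generator α_i = (a_i, b_i) with b_i > 0 lies in the cone
   { (x, y) : x <= s y } for s = Σ a_i / b_i, and multiplying by an element of
   C(Q) preserves this cone, so MN(α) lies in it. But w + (N, 0) leaves the
   cone once the integer N (which is in U(Q)) exceeds s w.2 - w.1. *)

Section Cone.
Set Implicit Arguments.
Unset Strict Implicit.
Variables (R : realType) (Q : pred R).

Lemma natr_in_subring (k : nat) :
  is_subring Q -> (k%:R : R) \in Q.
Proof.
case=> Q1 QB _.
have Q0 : (0 : R) \in Q by rewrite -(subrr 1) QB.
have Qm1 : (-1 : R) \in Q by rewrite -sub0r QB.
elim: k => [|k IHk] //.
by rewrite -addn1 natrD -[X in _ + X]opprK QB.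
Qed.

Lemma pmul_cone (s a b c d : R) :
  0 <= s -> 0 <= a -> 0 <= c -> 0 <= d -> a <= s * b ->
  (pmul (a, b) (c, d)).1 <= s * (pmul (a, b) (c, d)).2.
Proof.
move=> s0 a0 c0 d0 ab; rewrite /pmul /= mulrDr -[a * c]add0r.
apply: lerD; first by rewrite !mulr_ge0.
by rewrite mulrA ler_wpM2r.
Qed.

Lemma MN_cone (n : nat) (alpha : 'I_n -> R * R) (s : R) (v : R * R) :
  0 <= s -> (forall i, 0 <= (alpha i).1) ->
  (forall i, (alpha i).1 <= s * (alpha i).2) ->
  MN Q alpha v -> v.1 <= s * v.2.
Proof.
move=> s0 a0 ab [lam [Clam ->]] /=; rewrite mulr_sumr.
apply: ler_sum => i _; case: (Clam i) => _ c0 _ d0.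
by have := pmul_cone s0 (a0 i) c0 d0 (ab i); rewrite -!surjective_pairing.
Qed.

Lemma cone_slope_exists (n : nat) (alpha : 'I_n -> R * R) :
  (forall i, 0 <= (alpha i).1) -> (forall i, 0 < (alpha i).2) ->
  exists2 s : R, 0 <= s & forall i, (alpha i).1 <= s * (alpha i).2.
Proof.
move=> a0 b0; set s := \sum_i (alpha i).1 / (alpha i).2.
have ratio_ge0 i : 0 <= (alpha i).1 / (alpha i).2 by rewrite divr_ge0 // ltW.
exists s => [|i]; first exact: sumr_ge0.
rewrite -ler_pdivrMr // /s (bigD1 i) //= lerDl.
exact: sumr_ge0.
Qed.

Lemma exists_nat_gt_shift (s : R) (w : R * R) :
  exists N : nat, s * w.2 < w.1 + N%:R.
Proof.
exists (Num.Def.archi_bound `|s * w.2 - w.1|).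
rewrite -ltrBlDl; apply: le_lt_trans (ler_norm _) _.
exact: archi_boundP.
Qed.

Lemma Frob_empty_of_cone (n : nat) (alpha : 'I_n -> R * R) (s : R) (w : R * R) :
  is_subring Q -> 0 <= s -> (forall i, 0 <= (alpha i).1) ->
  (forall i, (alpha i).1 <= s * (alpha i).2) -> ~ Frob Q alpha w.
Proof.
move=> hQ s0 a0 ab [_ w_Frob].
have [N escape] := exists_nat_gt_shift s w.
have N_in_U : inU Q (N%:R, 0).
  by split; rewrite ?natr_in_subring // -(mulr0n 1) natr_in_subring.
have := MN_cone s0 a0 ab (w_Frob _ N_in_U).
by rewrite /padd /= addr0 leNgt escape.
Qed.

End Cone.

Theorem proposition4p1 (R : realType) (Q : pred R) (hQ : is_subring Q)
  (n : nat) (hn : (0 < n)%N) (alpha : 'I_n -> R * R)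
  (hA : forall i, inA Q (alpha i)) (hb : forall i, (alpha i).2 != 0) :
  forall w : R * R, ~ Frob Q alpha w.
Proof.
move=> w.
have a0 i : 0 <= (alpha i).1 by case: (hA i) => _ /ltW.
have b0 i : 0 < (alpha i).2 by case: (hA i) => _ _ _; rewrite lt_def hb.
have [s s0 ab] := cone_slope_exists a0 b0.
exact: Frob_empty_of_cone hQ s0 a0 ab.
Qed.
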